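(* Let $A$ and $B$ be rings, $f: A\to B$ a ring homomorphism and $J$ a proper ideal of $B$. Let $S$ be the set of regular central elements of $B$ (central elements that are not zero divisors), and assume $J\cap S\neq\varnothing$. Then $A\bowtie^{f}J$ is an Armendariz ring if and only if both $A$ and $f(A)+J$ are Armendariz rings.
   Context: All rings are associative with identity (not necessarily commutative), ring homomorphisms are unital, and ideals are two-sided. For a ring homomorphism $f:A\to B$ and an ideal $J$ of $B$, the amalgamation is the subring $A\bowtie^{f}J=\{(a,f(a)+j)\mid a\in A,\ j\in J\}$ of $A\times B$; $f(A)+J=\{f(a)+j: a\in A, j\in J\}$ is a subring of $B$. A ring $R$ is Armendariz if whenever $p(x)=\sum_{i=0}^n a_ix^i$ and $q(x)=\sum_{j=0}^m b_jx^j$ in $R[x]$ satisfy $p(x)q(x)=0$, then $a_ib_j=0$ for all $i,j$. *)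

From HB Require Import structures.
From mathcomp Require Import all_boot all_order all_algebra.
Set Implicit Arguments. Unset Strict Implicit. Unset Printing Implicit Defensive.
Import GRing.Theory.
Local Open Scope ring_scope.

(* Polynomials over S are identified with the
   polynomials over R all of whose coefficients lie in S. *)
Definition armendariz_in (R : nzRingType) (S : R -> Prop) : Prop :=
  forall p q : {poly R},
    (forall i, S p`_i) -> (forall j, S q`_j) -> p * q = 0 ->
    forall i j, p`_i * q`_j = 0.

Definition armendariz (R : nzRingType) : Prop := armendariz_in (fun _ : R => True).

Definition is_ideal2s (R : nzRingType) (J : R -> Prop) : Prop :=
  [/\ J 0, (forall x y, J x -> J y -> J (x + y)), (forall x, J x -> J (- x)),
      (forall r x, J x -> J (r * x)) & (forall r x, J x -> J (x * r))].

Definition proper_ideal2s (R : nzRingType) (J : R -> Prop) : Prop :=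
  is_ideal2s J /\ ~ J 1.

Definition central_elt (R : nzRingType) (s : R) : Prop := forall b, s * b = b * s.

Definition regular_elt (R : nzRingType) (s : R) : Prop :=
  forall b, (s * b = 0 -> b = 0) /\ (b * s = 0 -> b = 0).

(* A ⋈^f J as a subset of A × B *)
Definition amalg (A B : nzRingType) (f : {rmorphism A -> B}) (J : B -> Prop)
  : A * B -> Prop :=
  fun x => exists a j, J j /\ x = (a, f a + j).

Definition fAJ (A B : nzRingType) (f : {rmorphism A -> B}) (J : B -> Prop)
  : B -> Prop :=
  fun b => exists a j, J j /\ b = f a + j.

(* A polynomial over A × B is a pair of polynomials multiplied componentwise,
   so the Armendariz condition on A ⋈^f J splits into the conditions on its two
   projections, A and f(A) + J.  Conversely A embeds in A ⋈^f J by a ↦ (a, f a).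
   For f(A) + J, multiply p and q by a regular central s ∈ J: s p and s q have
   coefficients in J, which embeds in A ⋈^f J by b ↦ (0, b), and s² p_i q_j = 0
   forces p_i q_j = 0. *)
From HB Require Import structures.
From mathcomp Require Import all_boot all_order all_algebra.
Set Implicit Arguments.
Unset Strict Implicit.
Unset Printing Implicit Defensive.

Import GRing.Theory.
Local Open Scope ring_scope.

Section PairPoly.
Variables A B : nzRingType.

Definition pair_poly (p : {poly A}) (q : {poly B}) : {poly (A * B)%type} :=
  \poly_(i < maxn (size p) (size q)) (p`_i, q`_i).

Lemma coef_pair_poly p q i : (pair_poly p q)`_i = (p`_i, q`_i).
Proof.
rewrite /pair_poly coef_poly; case: ifP => // /negbT; rewrite -leqNgt geq_max.
by case/andP=> le_p le_q; rewrite !nth_default.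
Qed.

Lemma map_fst_pair_poly p q : map_poly fst (pair_poly p q) = p.
Proof. by apply/polyP => i; rewrite coef_map coef_pair_poly. Qed.

Lemma map_snd_pair_poly p q : map_poly snd (pair_poly p q) = q.
Proof. by apply/polyP => i; rewrite coef_map coef_pair_poly. Qed.

Lemma pair_poly_eta (P : {poly (A * B)%type}) :
  P = pair_poly (map_poly fst P) (map_poly snd P).
Proof. by apply/polyP => i; rewrite coef_pair_poly !coef_map; case: (P`_i). Qed.

Lemma pair_polyM p1 q1 p2 q2 :
  pair_poly p1 q1 * pair_poly p2 q2 = pair_poly (p1 * p2) (q1 * q2).
Proof.
by rewrite [LHS]pair_poly_eta !rmorphM /= !map_fst_pair_poly !map_snd_pair_poly.
Qed.

End PairPoly.

Section ArmendarizProduct.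
Variables A B : nzRingType.
Implicit Type S : A * B -> Prop.

Lemma armendariz_in_pair_poly S (p1 q1 : {poly A}) (p2 q2 : {poly B}) :
  armendariz_in S ->
  (forall i, S (p1`_i, p2`_i)) -> (forall j, S (q1`_j, q2`_j)) ->
  p1 * q1 = 0 -> p2 * q2 = 0 ->
  forall i j, p1`_i * q1`_j = 0 /\ p2`_i * q2`_j = 0.
Proof.
move=> armS Sp Sq pq1 pq2 i j.
have SP k : S (pair_poly p1 p2)`_k by rewrite coef_pair_poly.
have SQ k : S (pair_poly q1 q2)`_k by rewrite coef_pair_poly.
have pq0 : pair_poly p1 p2 * pair_poly q1 q2 = 0.
  by rewrite pair_polyM pq1 pq2; apply/polyP => k; rewrite coef_pair_poly !coef0.
by have := armS _ _ SP SQ pq0 i j; rewrite !coef_pair_poly => -[].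
Qed.

Lemma armendariz_in_prod S (SA : A -> Prop) (SB : B -> Prop) :
  (forall x, S x -> SA x.1 /\ SB x.2) ->
  armendariz_in SA -> armendariz_in SB -> armendariz_in S.
Proof.
move=> S_proj armA armB P Q SP SQ PQ i j.
have [fstPQ sndPQ] : map_poly fst P * map_poly fst Q = 0 /\
               map_poly snd P * map_poly snd Q = 0.
  by rewrite -!rmorphM PQ !rmorph0.
have coefA (R : {poly (A * B)%type}) :
    (forall k, S R`_k) -> forall k, SA (map_poly fst R)`_k.
  by move=> SR k; rewrite coef_map; case: (S_proj _ (SR k)).
have coefB (R : {poly (A * B)%type}) :
    (forall k, S R`_k) -> forall k, SB (map_poly snd R)`_k.
  by move=> SR k; rewrite coef_map; case: (S_proj _ (SR k)).
have := armA _ _ (coefA P SP) (coefA Q SQ) fstPQ i j.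
have := armB _ _ (coefB P SP) (coefB Q SQ) sndPQ i j.
rewrite !coef_map; case: (P`_i) => ? ?; case: (Q`_j) => ? ? /= eB eA.
exact: (f_equal2 pair eA eB).
Qed.

Lemma armendariz_in_graph S (g : {rmorphism A -> B}) :
  (forall a, S (a, g a)) -> armendariz_in S -> armendariz A.
Proof.
move=> Sg armS p q _ _ pq i j.
have Sp k : S (p`_k, (map_poly g p)`_k) by rewrite coef_map.
have Sq k : S (q`_k, (map_poly g q)`_k) by rewrite coef_map.
have gpq : map_poly g p * map_poly g q = 0 by rewrite -rmorphM pq rmorph0.
by case: (armendariz_in_pair_poly armS Sp Sq pq gpq i j).
Qed.

Lemma armendariz_in_snd S (T : B -> Prop) :
  (forall b, T b -> S (0, b)) -> armendariz_in S -> armendariz_in T.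
Proof.
move=> ST armS p q Tp Tq pq i j.
have Sp k : S ((0 : {poly A})`_k, p`_k) by rewrite coef0; exact: ST.
have Sq k : S ((0 : {poly A})`_k, q`_k) by rewrite coef0; exact: ST.
by case: (armendariz_in_pair_poly armS Sp Sq (mul0r 0) pq i j).
Qed.

End ArmendarizProduct.

Lemma armendariz_in_regular_scale (R : nzRingType) (s : R) (T U : R -> Prop) :
  central_elt s -> regular_elt s -> (forall b, T b -> U (s * b)) ->
  armendariz_in U -> armendariz_in T.
Proof.
move=> cs rs TU armU p q Tp Tq pq i j.
have Usp k : U (s%:P * p)`_k by rewrite coefCM; exact: TU.
have Usq k : U (s%:P * q)`_k by rewrite coefCM; exact: TU.
have cs_poly : p * s%:P = s%:P * p by apply/polyP => k; rewrite coefMC coefCM cs.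
have spq : s%:P * p * (s%:P * q) = 0.
  by rewrite -mulrA (mulrA p) cs_poly -mulrA pq !mulr0.
have := armU _ _ Usp Usq spq i j; rewrite !coefCM.
have -> : s * p`_i * (s * q`_j) = s * (s * (p`_i * q`_j)).
  by rewrite -!mulrA; congr (s * _); rewrite !mulrA cs.
by move=> /(proj1 (rs _)) /(proj1 (rs _)).
Qed.

Theorem theorem2p2 (A B : nzRingType) (f : {rmorphism A -> B}) (J : B -> Prop) :
  proper_ideal2s J ->
  (exists s : B, J s /\ central_elt s /\ regular_elt s) ->
  (armendariz_in (amalg f J) <-> armendariz A /\ armendariz_in (fAJ f J)).
Proof.
move=> [[J0 _ _ _ JR] _] [s [Js [cs rs]]]; split.
- move=> armAJ; split.
    by apply: (armendariz_in_graph _ armAJ) => a; exists a, 0; rewrite addr0.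
  apply: (armendariz_in_regular_scale cs rs (U := J)) => [b _|]; first exact: JR.
  apply: (armendariz_in_snd _ armAJ) => b Jb.
  by exists 0, b; rewrite rmorph0 add0r.
- move=> [armA armfAJ]; apply: armendariz_in_prod armA armfAJ.
  by move=> _ [a [j [Jj ->]]]; split => //; exists a, j.
Qed.
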